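(* Consider control protocol (C4) with $r_1=\cdots=r_n\ge\frac1{n-1}$. Then for any constants $z^*\in[0,1]$ and $\alpha^*>0$, the set $S_{z^*,\alpha^*}=\{(x_1,\dots,x_n)\in[0,1]^n:\max_{i\in\mathcal V}|x_i-z^*|<\alpha^*\}$ is finite-time robustly reachable from $[0,1]^n$.
   Context: Fix $n\ge3$, $\mathcal V=\{1,\dots,n\}$, confidence thresholds $r_i\in(0,1]$, $\eta>0$. States $x(t)\in[0,1]^n$. Neighbor set $\mathcal N_i(t)=\{j:|x_j(t)-x_i(t)|\le r_i\}$ (contains $i$), $\Pi_{[0,1]}(y)=\min\{1,\max\{0,y\}\}$. Control protocol (C4): $x_i(t+1)=\Pi_{[0,1]}\big(|\mathcal N_i(t)|^{-1}[x_i(t)+\sum_{j\in\mathcal N_i(t)\setminus\{i\}}(x_j(t)+u_{ji}(t)+b_{ji}(t))]\big)$, where for $j\in\mathcal N_i(t)\setminus\{i\}$: $\delta_i(t)\in(0,\eta)$ is a chosen parameter, $u_{ji}(t)\in[-\eta+\delta_i(t),\eta-\delta_i(t)]$ a chosen control input, $b_{ji}(t)\in[-\delta_i(t),\delta_i(t)]$ an arbitrary uncertainty; the choices may depend on $x(0),\dots,x(t)$. A set $S\subseteq[0,1]^n$ is finite-time robustly reachable from $[0,1]^n$ under the protocol if there exist constants $T>0$ and $\varepsilon\in(0,\eta)$ such that for every $x(0)\in[0,1]^n$, either $x(0)\in S$, or one can choose $\delta_i(t)\in[\varepsilon,\eta)$ and $u_{ji}(t)\in[-\eta+\delta_i(t),\eta-\delta_i(t)]$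 ($0\le t<T$, $i\in\mathcal V$, $j\in\mathcal N_i(t)\setminus\{i\}$) guaranteeing that for arbitrary $b_{ji}(t)\in[-\delta_i(t),\delta_i(t)]$ there is $t\in[1,T]$ with $x(t)\in S$. *)

From Stdlib Require Import Reals Lra List.
Import ListNotations.
Open Scope R_scope.

(* States are x : nat -> R; agents are 0, ..., n-1 (entries >= n are ignored). *)

Definition nbr (n : nat) (r : nat -> R) (x : nat -> R) (i : nat) : list nat :=
  filter (fun j => if Rle_dec (Rabs (x j - x i)) (r i) then true else false)
         (seq 0 n).

Definition sumR (l : list R) : R := fold_right Rplus 0 l.

Definition proj01 (y : R) : R := Rmin 1 (Rmax 0 y).

(* One step of protocol (C4): u j i = u_{ji}(t), bb j i = b_{ji}(t). *)
Definition step (n : nat) (r : nat -> R) (x : nat -> R)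
    (u : nat -> nat -> R) (bb : nat -> nat -> R) : nat -> R :=
  fun i =>
    let N := nbr n r x i in
    proj01 ((x i + sumR (map (fun j => x j + u j i + bb j i)
                              (filter (fun j => negb (Nat.eqb j i)) N)))
            / INR (length N)).

(* A history x(0), ..., x(t), stored as a list in chronological order. *)
Definition history := list (nat -> R).

Definition cur (x0 : nat -> R) (h : history) : nat -> R := last h x0.

(* ul t h j i = control input u_{ji}(t) chosen from history h = [x(0);...;x(t)];
   b t j i = uncertainty b_{ji}(t). *)
Fixpoint hist (n : nat) (r : nat -> R)
    (ul : nat -> history -> nat -> nat -> R) (b : nat -> nat -> nat -> R)
    (x0 : nat -> R) (t : nat) : history :=
  match t with
  | O => [x0]
  | S t' => let h := hist n r ul b x0 t' in
            h ++ [step n r (cur x0 h) (ul t' h) (b t')]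
  end.

Definition state n r ul b x0 t : nat -> R := cur x0 (hist n r ul b x0 t).

Definition in01 (n : nat) (x : nat -> R) : Prop :=
  forall i, (i < n)%nat -> 0 <= x i <= 1.

(* Finite-time robust reachability of S from [0,1]^n under (C4).
   Controls: delta t h i = delta_i(t), ul t h j i = u_{ji}(t), as feedback on the
   history h = [x(0);...;x(t)]. *)
Definition ftrr (n : nat) (r : nat -> R) (eta : R) (S : (nat -> R) -> Prop) : Prop :=
  exists (T : nat) (eps : R),
    (0 < T)%nat /\ 0 < eps < eta /\
    forall x0 : nat -> R, in01 n x0 ->
      S x0 \/
      exists (delta : nat -> history -> nat -> R)
             (ul : nat -> history -> nat -> nat -> R),
        (forall t h i, (t < T)%nat -> (i < n)%nat ->
           eps <= delta t h i < eta /\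
           forall j, In j (nbr n r (cur x0 h) i) -> j <> i ->
             - eta + delta t h i <= ul t h j i <= eta - delta t h i) /\
        forall b : nat -> nat -> nat -> R,
          (forall t i j, (t < T)%nat -> (i < n)%nat ->
             In j (nbr n r (state n r ul b x0 t) i) -> j <> i ->
             - delta t (hist n r ul b x0 t) i <= b t j i
               <= delta t (hist n r ul b x0 t) i) ->
          exists t : nat, (1 <= t <= T)%nat /\ S (state n r ul b x0 t).

Definition Sset (n : nat) (z alpha : R) (x : nat -> R) : Prop :=
  in01 n x /\ forall i, (i < n)%nat -> Rabs (x i - z) < alpha.

(* The controller runs in three phases.  First every agent is pushed down at full
   strength: agents with a neighbour descend (or stop at 0) while isolated ones do not
   move, so after [K] steps every non-isolated agent sits at 0.  As [r >= 1/(n-1)], two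
   agents are within [r] of each other, so this is a cluster of at least two agents, and
   every other agent is isolated and above it.  Second, the cluster rises by [s] per step
   and absorbs the lowest outsider once it is close enough; the potential
   [(1 - lo) + (s - d) * #outsiders] drops by [s - d] each step.  Third, with every agent
   in the cluster, the cluster moves toward [z] by [s] per step until all agents are
   within [d < alpha] of [z].  With a common control [u] from all neighbours of [i], the
   new [x_i] is the neighbourhood average shifted by a fixed fraction of [u], up to an
   error of at most [d] from the noise; this is what keeps each phase robust. *)

From Stdlib Require Import Reals Lra Lia List RList Bool ZArith Classical.
Import ListNotations.
Open Scope R_scope.

Definition mean (f : nat -> R) (l : list nat) : R := sumR (map f l) / INR (length l).

Lemma sumR_map_add (f g : nat -> R) l :
  sumR (map (fun j => f j + g j) l) = sumR (map f l) + sumR (map g l).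
Proof. induction l as [|a l IH]; simpl; [lra|]. rewrite IH. lra. Qed.

Lemma sumR_map_const (c : R) l : sumR (map (fun _ : nat => c) l) = INR (length l) * c.
Proof.
  induction l as [|a l IH]; simpl length; [simpl; lra|].
  rewrite S_INR. simpl. rewrite IH. lra.
Qed.

Lemma sumR_map_le (f g : nat -> R) l :
  (forall j, In j l -> f j <= g j) -> sumR (map f l) <= sumR (map g l).
Proof.
  induction l as [|a l IH]; intros H; simpl; [lra|].
  assert (f a <= g a) by (apply H; left; reflexivity).
  assert (sumR (map f l) <= sumR (map g l)) by (apply IH; intros j Hj; apply H; right; exact Hj).
  lra.
Qed.

Lemma sumR_map_lt (f g : nat -> R) l : l <> [] ->
  (forall j, In j l -> f j < g j) -> sumR (map f l) < sumR (map g l).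
Proof.
  destruct l as [|a l]; intros Hl H; [congruence|]. simpl.
  assert (f a < g a) by (apply H; left; reflexivity).
  assert (sumR (map f l) <= sumR (map g l))
    by (apply sumR_map_le; intros j Hj; apply Rlt_le, H; right; exact Hj).
  lra.
Qed.

Lemma sumR_pivot (f : nat -> R) i l : NoDup l -> In i l ->
  sumR (map f l) = f i + sumR (map f (filter (fun j => negb (j =? i)%nat) l)).
Proof.
  induction l as [|a l IH]; intros Hd Hi; [destruct Hi|].
  inversion Hd as [|? ? Ha Hd']; subst. simpl.
  destruct (Nat.eqb_spec a i) as [->|Hne]; simpl.
  - rewrite (forallb_filter_id _ l); [reflexivity|].
    apply forallb_forall. intros j Hj. destruct (Nat.eqb_spec j i); [congruence|reflexivity].
  - destruct Hi as [Hi|Hi]; [congruence|]. rewrite (IH Hd' Hi). lra.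
Qed.

Lemma length_pos (l : list nat) : l <> [] -> 1 <= INR (length l).
Proof.
  destruct l; [congruence|]. intros _. simpl length. rewrite S_INR.
  pose proof (pos_INR (length l)). lra.
Qed.

Lemma mean_scaled (f : nat -> R) l : l <> [] -> mean f l * INR (length l) = sumR (map f l).
Proof. intros Hl. pose proof (length_pos l Hl). unfold mean. field. lra. Qed.

Lemma mean_le (f : nat -> R) c l : l <> [] -> (forall j, In j l -> f j <= c) -> mean f l <= c.
Proof.
  intros Hl H. apply (Rmult_le_reg_r (INR (length l))); [pose proof (length_pos l Hl); lra|].
  rewrite mean_scaled, Rmult_comm, <- sumR_map_const by exact Hl. apply sumR_map_le, H.
Qed.

Lemma mean_ge (f : nat -> R) c l : l <> [] -> (forall j, In j l -> c <= f j) -> c <= mean f l.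
Proof.
  intros Hl H. apply (Rmult_le_reg_r (INR (length l))); [pose proof (length_pos l Hl); lra|].
  rewrite mean_scaled, Rmult_comm, <- sumR_map_const by exact Hl. apply sumR_map_le, H.
Qed.

Lemma mean_lt (f : nat -> R) c l : l <> [] -> (forall j, In j l -> f j < c) -> mean f l < c.
Proof.
  intros Hl H. apply (Rmult_lt_reg_r (INR (length l))); [pose proof (length_pos l Hl); lra|].
  rewrite mean_scaled, Rmult_comm, <- sumR_map_const by exact Hl. apply sumR_map_lt; assumption.
Qed.

Lemma length_filter_lt (f g : nat -> bool) (l : list nat) :
  (forall j, g j = true -> f j = true) -> (exists p, In p l /\ f p = true /\ g p = false) ->
  (length (filter g l) < length (filter f l))%nat.
Proof.
  intros Hgf. induction l as [|a l IH]; intros [p [Hp [Hfp Hgp]]]; [destruct Hp|].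
  assert (Hle : (length (filter g l) <= length (filter f l))%nat).
  { clear IH Hp. induction l as [|b l IHl]; simpl; [lia|].
    destruct (g b) eqn:Hb; [rewrite (Hgf b Hb)|destruct (f b)]; simpl; lia. }
  simpl. destruct Hp as [<-|Hp].
  - rewrite Hfp, Hgp. simpl. lia.
  - specialize (IH (ex_intro _ p (conj Hp (conj Hfp Hgp)))).
    destruct (g a) eqn:Ha; [rewrite (Hgf a Ha)|destruct (f a)]; simpl; lia.
Qed.

Lemma MinRlist_In (l : list R) : l <> [] -> In (MinRlist l) l.
Proof.
  induction l as [|a [|b l] IH]; intros Hl; [congruence|left; reflexivity|].
  change (In (Rmin a (MinRlist (b :: l))) (a :: b :: l)).
  apply Rmin_case; [left; reflexivity|right; apply IH; discriminate].
Qed.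

Lemma nat_pigeonhole (f : nat -> nat) (n m : nat) :
  (m < n)%nat -> (forall i, (i < n)%nat -> (f i < m)%nat) ->
  exists i j, (i < n)%nat /\ (j < n)%nat /\ i <> j /\ f i = f j.
Proof.
  intros Hmn Hf. apply NNPP. intros Hno.
  assert (Hnd : NoDup (map f (seq 0 n))).
  { apply NoDup_map_NoDup_ForallPairs; [|apply seq_NoDup].
    intros i j Hi Hj Hij. apply in_seq in Hi, Hj.
    destruct (Nat.eq_dec i j) as [|Hne]; [assumption|].
    exfalso. apply Hno. exists i, j. repeat split; auto; lia. }
  assert (Hincl : incl (map f (seq 0 n)) (seq 0 m)).
  { intros v Hv. apply in_map_iff in Hv. destruct Hv as [i [<- Hi]].
    apply in_seq in Hi. apply in_seq. specialize (Hf i ltac:(lia)). lia. }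
  pose proof (NoDup_incl_length Hnd Hincl) as Hlen.
  rewrite length_map, !length_seq in Hlen. lia.
Qed.

Lemma exists_nat_mult_ge (a g : R) : 0 < g -> exists N : nat, a <= INR N * g.
Proof.
  intros Hg. destruct (INR_unbounded (a / g)) as [N HN]. exists N.
  apply (Rmult_le_reg_r (/ g)); [apply Rinv_0_lt_compat, Hg|].
  rewrite Rmult_assoc, Rinv_r, Rmult_1_r by lra. unfold Rdiv in HN. lra.
Qed.

Lemma potential_descent (P : nat -> R -> Prop) (Q : nat -> Prop) (g : R) (N t : nat) (v : R) :
  0 < g ->
  (forall t' w, (t <= t' <= t + N)%nat -> P t' w -> Q t' \/ (0 < w /\ P (S t') (w - g))) ->
  P t v -> v <= INR N * g -> exists t', (t <= t' <= t + N)%nat /\ Q t'.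
Proof.
  intros Hg. revert t v. induction N as [|N IH]; intros t v Hstep HP Hv.
  - destruct (Hstep t v ltac:(lia) HP) as [HQ|[Hw _]].
    + exists t. split; [lia|exact HQ].
    + simpl in Hv. lra.
  - destruct (Hstep t v ltac:(lia) HP) as [HQ|[_ HP']].
    + exists t. split; [lia|exact HQ].
    + destruct (IH (S t) (v - g)) as [t' [Ht' HQ]];
        [intros t' w Ht' Hw; apply Hstep; [lia|exact Hw]|exact HP'| |].
      * rewrite S_INR in Hv. lra.
      * exists t'. split; [lia|exact HQ].
Qed.

Definition clip (w y : R) : R := Rmax (- w) (Rmin w y).

Lemma clip_id w y : Rabs y <= w -> clip w y = y.
Proof. unfold clip, Rmax, Rmin. split_Rabs; repeat destruct Rle_dec; lra. Qed.

Lemma clip_bound w y : 0 <= w -> Rabs (clip w y) <= w.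
Proof. unfold clip, Rmax, Rmin. intros. repeat destruct Rle_dec; split_Rabs; lra. Qed.

Lemma clip_toward (s y z : R) : 0 <= s ->
  Rabs (y + clip s (z - y) - z) = Rmax 0 (Rabs (z - y) - s).
Proof. unfold clip, Rmax, Rmin. intros. repeat destruct Rle_dec; split_Rabs; lra. Qed.

Lemma proj01_in01 y : 0 <= proj01 y <= 1.
Proof. unfold proj01, Rmin, Rmax. repeat destruct Rle_dec; lra. Qed.

Lemma proj01_id y : 0 <= y <= 1 -> proj01 y = y.
Proof. unfold proj01, Rmin, Rmax. repeat destruct Rle_dec; lra. Qed.

Lemma proj01_dist y T : 0 <= T <= 1 -> Rabs (proj01 y - T) <= Rabs (y - T).
Proof. unfold proj01, Rmin, Rmax. intros. repeat destruct Rle_dec; split_Rabs; lra. Qed.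

Lemma proj01_le_Rmax y : proj01 y <= Rmax 0 y.
Proof. unfold proj01, Rmin, Rmax. repeat destruct Rle_dec; lra. Qed.

Lemma state_succ n r ul b x0 t :
  state n r ul b x0 (S t) = step n r (state n r ul b x0 t) (ul t (hist n r ul b x0 t)) (b t).
Proof. unfold state at 1. simpl. unfold cur at 1. rewrite last_last. reflexivity. Qed.

Lemma state_in01 n r ul b x0 t : in01 n x0 -> in01 n (state n r ul b x0 t).
Proof.
  intros H0 i Hi. destruct t as [|t]; [exact (H0 i Hi)|].
  rewrite state_succ. unfold step. apply proj01_in01.
Qed.

Lemma bucket_bounds (y : R) (m : nat) : 0 <= y <= INR m + 1 ->
  INR (Nat.min (Z.to_nat (Zfloor y)) m) <= y <= INR (Nat.min (Z.to_nat (Zfloor y)) m) + 1.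
Proof.
  intros Hy. pose proof (Zfloor_bound y) as Hfl.
  assert (Hpos : (0 <= Zfloor y)%Z) by (apply Zfloor_lub; simpl; lra).
  assert (Hk : INR (Z.to_nat (Zfloor y)) = IZR (Zfloor y)) by (rewrite INR_IZR_INZ, Z2Nat.id; auto).
  destruct (Nat.le_ge_cases (Z.to_nat (Zfloor y)) m) as [Hle|Hge].
  - rewrite Nat.min_l, Hk by exact Hle. lra.
  - rewrite Nat.min_r by exact Hge. apply le_INR in Hge. lra.
Qed.

(* Pigeonhole on the [n - 1] buckets of width [1 / (n - 1)] covering [[0,1]]. *)
Lemma exists_close_pair (n : nat) (r : R) (x : nat -> R) : (2 <= n)%nat -> in01 n x ->
  1 / INR (n - 1) <= r -> exists i j, (i < n)%nat /\ (j < n)%nat /\ i <> j /\ Rabs (x i - x j) <= r.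
Proof.
  intros Hn Hx Hr. set (m := INR (n - 1)).
  assert (Hm : 1 <= m) by (unfold m; replace 1 with (INR 1) by reflexivity; apply le_INR; lia).
  assert (Hm' : m = INR (n - 2) + 1) by (unfold m; rewrite <- S_INR; f_equal; lia).
  set (f := fun i => Nat.min (Z.to_nat (Zfloor (x i * m))) (n - 2)).
  assert (Hf : forall i, (i < n)%nat -> INR (f i) <= x i * m <= INR (f i) + 1).
  { intros i Hi. apply bucket_bounds. pose proof (Hx i Hi). nra. }
  destruct (nat_pigeonhole f n (n - 1)) as [i [j [Hi [Hj [Hij Hfij]]]]];
    [lia|intros i Hi; unfold f; lia|].
  exists i, j. repeat split; auto.
  pose proof (Hf i Hi). pose proof (Hf j Hj). rewrite Hfij in *.
  apply Rle_trans with (1 / m); [|exact Hr].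
  apply (Rmult_le_reg_r m); [lra|]. unfold Rdiv.
  rewrite Rmult_assoc, Rinv_l, <- (Rabs_pos_eq m), <- Rabs_mult by lra. apply Rabs_le. lra.
Qed.

Section Protocol.

Variables (n : nat) (r : R).
Hypothesis r_nonneg : 0 <= r.

Notation nb := (nbr n (fun _ => r)).
Notation others x i := (filter (fun j => negb (j =? i)%nat) (nb x i)).

Definition has_nbr (x : nat -> R) (i : nat) : Prop :=
  exists j, (j < n)%nat /\ j <> i /\ Rabs (x j - x i) <= r.

Definition avg (x : nat -> R) (i : nat) : R := mean x (nb x i).

(* The weight [(|N_i| - 1) / |N_i|] that the protocol gives to the other neighbours. *)
Definition share (x : nat -> R) (i : nat) : R := 1 - / INR (length (nb x i)).

Definition noise_bounded (d : R) (x : nat -> R) (bb : nat -> nat -> R) : Prop :=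
  forall i j, (i < n)%nat -> In j (nb x i) -> j <> i -> - d <= bb j i <= d.

Lemma In_nbr x i j : In j (nb x i) <-> (j < n)%nat /\ Rabs (x j - x i) <= r.
Proof.
  unfold nbr. rewrite filter_In, in_seq.
  destruct (Rle_dec (Rabs (x j - x i)) r); intuition (try lia; discriminate).
Qed.

Lemma nbr_self x i : (i < n)%nat -> In i (nb x i).
Proof.
  intros Hi. apply In_nbr. split; [exact Hi|]. rewrite Rminus_diag, Rabs_R0. exact r_nonneg.
Qed.

Lemma nbr_nonempty x i : (i < n)%nat -> nb x i <> [].
Proof. intros Hi E. pose proof (nbr_self x i Hi) as H. rewrite E in H. exact H. Qed.

Lemma In_others x i j : In j (others x i) <-> (j < n)%nat /\ j <> i /\ Rabs (x j - x i) <= r.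
Proof. rewrite filter_In, In_nbr. destruct (Nat.eqb_spec j i); simpl; intuition discriminate. Qed.

Lemma sumR_nbr_pivot (f : nat -> R) x i : (i < n)%nat ->
  sumR (map f (nb x i)) = f i + sumR (map f (others x i)).
Proof. intros Hi. apply sumR_pivot; [apply NoDup_filter, seq_NoDup|apply nbr_self, Hi]. Qed.

Lemma length_nbr x i : (i < n)%nat -> INR (length (nb x i)) = 1 + INR (length (others x i)).
Proof.
  intros Hi. pose proof (sumR_nbr_pivot (fun _ => 1) x i Hi) as E.
  rewrite !sumR_map_const in E. lra.
Qed.

Lemma others_nil x i : ~ has_nbr x i -> others x i = [].
Proof.
  intros Hiso. destruct (others x i) as [|j l] eqn:E; [reflexivity|].
  exfalso. apply Hiso. exists j. apply In_others. rewrite E. left. reflexivity.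
Qed.

Lemma share_has_nbr x i : (i < n)%nat -> has_nbr x i -> 1 / 2 <= share x i <= 1.
Proof.
  intros Hi [j Hj]. unfold share. rewrite length_nbr by exact Hi.
  assert (Hk : 1 <= INR (length (others x i))) by (apply length_pos; intros E;
    assert (Hin : In j (others x i)) by (apply In_others; tauto); rewrite E in Hin; exact Hin).
  split; [apply (Rmult_le_reg_r (1 + INR (length (others x i))))|]; [lra| |].
  - field_simplify; lra.
  - pose proof (Rinv_0_lt_compat (1 + INR (length (others x i)))). lra.
Qed.

Lemma not_has_nbr_far x i j : ~ has_nbr x i -> (j < n)%nat -> j <> i -> r < Rabs (x j - x i).
Proof. intros Hiso Hj Hji. apply Rnot_le_lt. intros Hle. apply Hiso. exists j. auto. Qed.

Lemma step_isolated x u bb i : (i < n)%nat -> ~ has_nbr x i -> 0 <= x i <= 1 ->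
  step n (fun _ => r) x u bb i = x i.
Proof.
  intros Hi Hiso Hx. pose proof (length_nbr x i Hi) as Hlen. unfold step.
  rewrite others_nil in * by exact Hiso. simpl in Hlen |- *. rewrite Hlen.
  rewrite proj01_id; lra.
Qed.

Lemma step_decomp x u bb i c d : (i < n)%nat -> (forall j, u j i = c) -> noise_bounded d x bb ->
  exists e, Rabs e <= share x i * d /\
    step n (fun _ => r) x u bb i = proj01 (avg x i + share x i * c + e).
Proof.
  intros Hi Hu Hb. set (k := INR (length (others x i))).
  assert (Hm : INR (length (nb x i)) = 1 + k) by (apply length_nbr, Hi).
  assert (Hk : 0 <= k) by apply pos_INR.
  set (E := sumR (map (fun j => bb j i) (others x i))).
  assert (HE : - (k * d) <= E <= k * d).
  { assert (Hbj : forall j, In j (others x i) -> - d <= bb j i <= d).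
    { intros j Hj. apply In_others in Hj. apply (Hb i j Hi); [apply In_nbr|]; tauto. }
    pose proof (sumR_map_le (fun _ => - d) (fun j => bb j i) (others x i)) as Hlo.
    pose proof (sumR_map_le (fun j => bb j i) (fun _ => d) (others x i)) as Hhi.
    rewrite sumR_map_const in Hlo, Hhi. fold E k in Hlo, Hhi.
    assert (k * - d <= E) by (apply Hlo; intros j Hj; apply Hbj, Hj).
    assert (E <= k * d) by (apply Hhi; intros j Hj; apply Hbj, Hj).
    lra. }
  exists (E / (1 + k)). split.
  - unfold share. rewrite Hm. apply Rabs_le.
    replace ((1 - / (1 + k)) * d) with (k * d / (1 + k)) by (field; lra).
    split; [rewrite Ropp_div_distr_l|]; apply Rmult_le_compat_r; try lra;
      apply Rlt_le, Rinv_0_lt_compat; lra.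
  - unfold step. f_equal.
    rewrite (map_ext (fun j => x j + u j i + bb j i) (fun j => (x j + c) + bb j i))
      by (intros j; rewrite Hu; reflexivity).
    rewrite !sumR_map_add, sumR_map_const. fold E. fold k.
    unfold avg, mean, share. rewrite sumR_nbr_pivot, Hm by exact Hi. field. lra.
Qed.

Lemma nbr_has_nbr x i j : (i < n)%nat -> has_nbr x i -> In j (nb x i) -> has_nbr x j.
Proof.
  intros Hi Hn Hj. apply In_nbr in Hj. destruct Hj as [Hj Hd].
  destruct (Nat.eq_dec j i) as [->|Hji]; [exact Hn|].
  exists i. split; [exact Hi|]. split; [auto|]. rewrite Rabs_minus_sym. exact Hd.
Qed.

(* The control moving the neighbourhood of [i] to [T], saturated at the admissible bound. *)
Definition steer (eta d T : R) (x : nat -> R) (i : nat) : R :=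
  clip (eta - d) ((T - avg x i) / share x i).

Lemma step_steer x u bb i eta d T : (i < n)%nat -> has_nbr x i -> 0 <= d ->
  (forall j, u j i = steer eta d T x i) -> noise_bounded d x bb ->
  Rabs (T - avg x i) <= (eta - d) / 2 -> 0 <= T <= 1 ->
  Rabs (step n (fun _ => r) x u bb i - T) <= d.
Proof.
  intros Hi Hn Hd Hu Hb HTA HT.
  destruct (step_decomp x u bb i _ d Hi Hu Hb) as [e [He ->]].
  pose proof (share_has_nbr x i Hi Hn) as Hs.
  set (q := (T - avg x i) / share x i).
  assert (Hq : T - avg x i = share x i * q) by (unfold q; field; lra).
  assert (Hunsat : steer eta d T x i = q).
  { apply clip_id. rewrite Hq, Rabs_mult, (Rabs_pos_eq (share x i)) in HTA by lra.
    pose proof (Rabs_pos q). nra. }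
  rewrite Hunsat, <- Hq.
  eapply Rle_trans; [apply proj01_dist, HT|].
  replace (avg x i + (T - avg x i) + e - T) with e by ring. nra.
Qed.

Lemma step_down x u bb i eta d : (i < n)%nat -> has_nbr x i -> 0 <= d -> 2 * d <= eta ->
  (forall j, u j i = - (eta - d)) -> noise_bounded d x bb ->
  step n (fun _ => r) x u bb i <= Rmax 0 (avg x i - (eta - 2 * d) / 2).
Proof.
  intros Hi Hn Hd Hde Hu Hb.
  destruct (step_decomp x u bb i _ d Hi Hu Hb) as [e [He ->]].
  pose proof (share_has_nbr x i Hi Hn) as Hs. pose proof (Rle_abs e).
  eapply Rle_trans; [apply proj01_le_Rmax|]. apply Rle_max_compat_l. nra.
Qed.

Definition low (B : R) (x : nat -> R) : Prop :=
  forall i, (i < n)%nat -> has_nbr x i -> x i <= B.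

Lemma low_mono B B' x : B <= B' -> low B x -> low B' x.
Proof. intros HB Hlow i Hi Hn. pose proof (Hlow i Hi Hn). lra. Qed.

Lemma low_avg B x i : (i < n)%nat -> low B x -> has_nbr x i -> avg x i <= B.
Proof.
  intros Hi Hlow Hn. apply mean_le; [apply nbr_nonempty, Hi|].
  intros j Hj. apply Hlow; [apply In_nbr in Hj; tauto|]. apply (nbr_has_nbr x i j Hi Hn Hj).
Qed.

Section Descent.

Variables (eta d : R) (x : nat -> R) (u bb : nat -> nat -> R).
Hypotheses (d_nonneg : 0 <= d) (d_eta : 2 * d <= eta) (x_in01 : in01 n x)
  (u_down : forall j i, u j i = - (eta - d)) (bb_bounded : noise_bounded d x bb).

(* An isolated agent [i] does not move, so a new neighbour [q] must have come from
   within [r] of it; if [i] sat at or above [B - r], every neighbour of [q] would lie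
   below [x i - r] and so would the new position of [q]. *)
Lemma isolated_gaining_nbr_below B i : low B x -> (i < n)%nat -> ~ has_nbr x i ->
  has_nbr (step n (fun _ => r) x u bb) i -> x i < B - r.
Proof.
  intros Hlow Hi Hiso [q [Hq [Hqi Hqd]]].
  rewrite (step_isolated x u bb i Hi Hiso (x_in01 i Hi)) in Hqd.
  assert (Hnq : has_nbr x q).
  { apply NNPP. intros Hisoq. rewrite (step_isolated x u bb q Hq Hisoq (x_in01 q Hq)) in Hqd.
    apply Hiso. exists q. auto. }
  apply Rnot_le_lt. intros HiB.
  assert (Hbelow : forall a, In a (nb x q) -> x a < x i - r).
  { intros a Ha. assert (Hxa : x a <= B) by (apply Hlow; [apply In_nbr in Ha; tauto|];
      exact (nbr_has_nbr x q a Hq Hnq Ha)).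
    apply In_nbr in Ha. destruct Ha as [Ha Haq].
    destruct (Nat.eq_dec a i) as [->|Hai].
    - exfalso. apply Hiso. exists q. split; [exact Hq|]. split; [auto|].
      rewrite Rabs_minus_sym. exact Haq.
    - pose proof (not_has_nbr_far x i a Hiso Ha Hai). split_Rabs; lra. }
  pose proof (mean_lt x _ (nb x q) (nbr_nonempty x q Hq) Hbelow) as Havg.
  pose proof (step_down x u bb q eta d Hq Hnq d_nonneg d_eta (fun j => u_down j q) bb_bounded).
  pose proof (Hbelow q (nbr_self x q Hq)). pose proof (x_in01 q Hq).
  unfold avg, Rmax in *. destruct Rle_dec; split_Rabs; lra.
Qed.

Lemma low_step B : low B x ->
  low (Rmax 0 (B - Rmin ((eta - 2 * d) / 2) r)) (step n (fun _ => r) x u bb).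
Proof.
  intros Hlow i Hi Hn'.
  pose proof (Rmin_l ((eta - 2 * d) / 2) r). pose proof (Rmin_r ((eta - 2 * d) / 2) r).
  destruct (classic (has_nbr x i)) as [Hn|Hiso].
  - eapply Rle_trans;
      [apply (step_down x u bb i eta d Hi Hn d_nonneg d_eta (fun j => u_down j i) bb_bounded)|].
    apply Rle_max_compat_l. pose proof (low_avg B x i Hi Hlow Hn). lra.
  - rewrite (step_isolated x u bb i Hi Hiso (x_in01 i Hi)).
    pose proof (isolated_gaining_nbr_below B i Hlow Hi Hiso Hn').
    eapply Rle_trans; [|apply Rmax_r]. lra.
Qed.

End Descent.

Record cluster (x : nat -> R) (C : nat -> bool) (lo hi : R) : Prop := {
  cluster_members : forall i, (i < n)%nat -> C i = true -> lo <= x i <= hi;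
  cluster_width : hi - lo <= r;
  cluster_pair : exists i j, (i < n)%nat /\ (j < n)%nat /\ i <> j /\ C i = true /\ C j = true;
  cluster_above : forall i, (i < n)%nat -> C i = false -> hi + r < x i;
  cluster_apart : forall i j, (i < n)%nat -> (j < n)%nat -> i <> j -> C i = false -> C j = false ->
    r < Rabs (x i - x j) }.

Arguments cluster_members {x C lo hi}.
Arguments cluster_width {x C lo hi}.
Arguments cluster_pair {x C lo hi}.
Arguments cluster_above {x C lo hi}.
Arguments cluster_apart {x C lo hi}.

Definition members (C : nat -> bool) : list nat := filter C (seq 0 n).

Definition n_outsiders (C : nat -> bool) : nat :=
  length (filter (fun j => negb (C j)) (seq 0 n)).

Section ClusterGeometry.

Variables (x : nat -> R) (C : nat -> bool) (lo hi : R).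
Hypothesis x_cluster : cluster x C lo hi.

Lemma nbr_member i : (i < n)%nat -> C i = true -> nb x i = members C.
Proof.
  intros Hi Ci. apply filter_ext_in. intros j Hj. apply in_seq in Hj.
  pose proof (cluster_members x_cluster i Hi Ci).
  pose proof (cluster_width x_cluster).
  destruct (C j) eqn:Cj.
  - pose proof (cluster_members x_cluster j ltac:(lia) Cj).
    destruct Rle_dec as [|Hfar]; [reflexivity|]. exfalso. apply Hfar. split_Rabs; lra.
  - pose proof (cluster_above x_cluster j ltac:(lia) Cj).
    destruct Rle_dec as [Hnear|]; [|reflexivity]. split_Rabs; lra.
Qed.

Lemma member_has_nbr i : (i < n)%nat -> C i = true -> has_nbr x i.
Proof.
  intros Hi Ci. destruct (cluster_pair x_cluster) as [a [b [Ha [Hb [Hab [Ca Cb]]]]]].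
  assert (Hclose : forall j, (j < n)%nat -> C j = true -> Rabs (x j - x i) <= r).
  { intros j Hj Cj. pose proof (cluster_members x_cluster i Hi Ci).
    pose proof (cluster_members x_cluster j Hj Cj).
    pose proof (cluster_width x_cluster). split_Rabs; lra. }
  destruct (Nat.eq_dec a i) as [->|Hai]; [exists b|exists a]; auto.
Qed.

Lemma outsider_isolated i : (i < n)%nat -> C i = false -> ~ has_nbr x i.
Proof.
  intros Hi Ci [j [Hj [Hji Hd]]]. destruct (C j) eqn:Cj.
  - pose proof (cluster_members x_cluster j Hj Cj).
    pose proof (cluster_above x_cluster i Hi Ci). split_Rabs; lra.
  - pose proof (cluster_apart x_cluster j i Hj Hi Hji Cj Ci). lra.
Qed.

Lemma cluster_lo_le_1 : in01 n x -> lo <= 1.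
Proof.
  intros Hx. destruct (cluster_pair x_cluster) as [a [_ [Ha [_ [_ [Ca _]]]]]].
  pose proof (cluster_members x_cluster a Ha Ca). pose proof (Hx a Ha). lra.
Qed.

Lemma members_nonempty : members C <> [].
Proof.
  destruct (cluster_pair x_cluster) as [a [_ [Ha [_ [_ [Ca _]]]]]]. intros E.
  assert (Hin : In a (members C)) by (apply filter_In; rewrite in_seq; split; [lia|exact Ca]).
  rewrite E in Hin. exact Hin.
Qed.

Lemma mean_members_bounds : lo <= mean x (members C) <= hi.
Proof.
  assert (Hm : forall j, In j (members C) -> lo <= x j <= hi).
  { intros j Hj. apply filter_In in Hj. destruct Hj as [Hj Cj]. apply in_seq in Hj.
    apply (cluster_members x_cluster); [lia|exact Cj]. }
  split; [apply mean_ge|apply mean_le]; try exact members_nonempty; intros j Hj; apply Hm, Hj.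
Qed.

End ClusterGeometry.

Lemma cluster_at_bottom x : in01 n x -> low 0 x ->
  (exists i j, (i < n)%nat /\ (j < n)%nat /\ i <> j /\ Rabs (x i - x j) <= r) ->
  cluster x (fun j => if Rle_dec (x j) 0 then true else false) 0 0.
Proof.
  intros Hx Hlow [a [b [Ha [Hb [Hab Hd]]]]].
  assert (Hzero : forall i, (i < n)%nat -> has_nbr x i -> x i = 0)
    by (intros i Hi Hn; pose proof (Hlow i Hi Hn); pose proof (Hx i Hi); lra).
  assert (Han : has_nbr x a) by (exists b; rewrite Rabs_minus_sym; auto).
  assert (Hbn : has_nbr x b) by (exists a; auto).
  assert (Hout : forall i, (i < n)%nat -> (if Rle_dec (x i) 0 then true else false) = false ->
                 ~ has_nbr x i).
  { intros i Hi Ci Hn. rewrite (Hzero i Hi Hn) in Ci. destruct Rle_dec; [discriminate|lra]. }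
  constructor.
  - intros i Hi Ci. destruct Rle_dec; [|discriminate]. pose proof (Hx i Hi). lra.
  - lra.
  - exists a, b. rewrite (Hzero a Ha Han), (Hzero b Hb Hbn). destruct Rle_dec; [auto|lra].
  - intros i Hi Ci.
    assert (Hai : a <> i) by (intros E; rewrite <- E in Ci; exact (Hout a Ha Ci Han)).
    pose proof (not_has_nbr_far x i a (Hout i Hi Ci) Ha Hai). rewrite (Hzero a Ha Han) in *.
    pose proof (Hx i Hi). split_Rabs; lra.
  - intros i j Hi Hj Hij Ci Cj. rewrite Rabs_minus_sym.
    exact (not_has_nbr_far x i j (Hout i Hi Ci) Hj (not_eq_sym Hij)).
Qed.


Definition far (N : list nat) : list nat :=
  filter (fun j => if in_dec Nat.eq_dec j N then false else true) (seq 0 n).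

(* Agents not in [N] all sit above it.  While some remain, [N] rises by [s] per step
   until it can absorb the lowest of them, [P], by landing in [[P - r, P]]; once none
   remain it moves toward [z] by at most [s] per step. *)
Definition target (z s d : R) (x : nat -> R) (N : list nat) : R :=
  let A := mean x N in
  match map x (far N) with
  | [] => A + clip s (z - A)
  | V => let P := MinRlist V in if Rlt_dec (A + s + d) (P - r) then A + s else P - r + d
  end.

Definition ctrl (eta d z s : R) (x : nat -> R) (i : nat) : R :=
  steer eta d (target z s d x (nb x i)) x i.

Lemma far_members C j : In j (far (members C)) <-> (j < n)%nat /\ C j = false.
Proof.
  unfold far, members. rewrite filter_In, in_seq.
  destruct (in_dec Nat.eq_dec j (filter C (seq 0 n))) as [Hj|Hj];
    rewrite filter_In, in_seq in Hj; destruct (C j); intuition (try lia; discriminate).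
Qed.

Lemma target_no_far z s d x N : far N = [] -> target z s d x N = mean x N + clip s (z - mean x N).
Proof. intros E. unfold target. rewrite E. reflexivity. Qed.

Lemma target_far z s d x N : far N <> [] ->
  exists p, In p (far N) /\ (forall j, In j (far N) -> x p <= x j) /\
    target z s d x N = if Rlt_dec (mean x N + s + d) (x p - r)
                       then mean x N + s else x p - r + d.
Proof.
  intros Hne. unfold target. destruct (map x (far N)) as [|v V] eqn:E.
  - apply map_eq_nil in E. contradiction.
  - assert (Hmin : In (MinRlist (v :: V)) (map x (far N)))
      by (rewrite E; apply MinRlist_In; discriminate).
    apply in_map_iff in Hmin. destruct Hmin as [p [Hp Hpf]].
    exists p. split; [exact Hpf|]. rewrite Hp. split; [|reflexivity].
    intros j Hj. apply MinRlist_P1. rewrite <- E. apply in_map, Hj.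
Qed.

Section ClusterDynamics.

Variables (eta d z s : R).
Hypotheses (d_pos : 0 < d) (d_r : 2 * d <= r) (s_gt_d : d < s)
  (s_reach : s + 2 * d <= (eta - d) / 2).

Variables (x : nat -> R) (u bb : nat -> nat -> R) (C : nat -> bool) (lo hi : R).
Hypotheses (x_in01 : in01 n x) (x_cluster : cluster x C lo hi)
  (u_ctrl : forall j i, u j i = ctrl eta d z s x i) (bb_bounded : noise_bounded d x bb).

Notation x' := (step n (fun _ => r) x u bb).
Notation A := (mean x (members C)).

Lemma step_outsider i : (i < n)%nat -> C i = false -> x' i = x i.
Proof.
  intros Hi Ci. apply step_isolated; [exact Hi| |apply x_in01, Hi].
  exact (outsider_isolated x C lo hi x_cluster i Hi Ci).
Qed.

Lemma step_members T : target z s d x (members C) = T -> Rabs (T - A) <= (eta - d) / 2 ->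
  0 <= T <= 1 -> forall i, (i < n)%nat -> C i = true -> Rabs (x' i - T) <= d.
Proof.
  intros HT HTA HT01 i Hi Ci. pose proof (nbr_member x C lo hi x_cluster i Hi Ci) as HN.
  apply (step_steer x u bb i eta d T Hi (member_has_nbr x C lo hi x_cluster i Hi Ci)); try lra.
  - intros j. rewrite u_ctrl. unfold ctrl. rewrite HN, HT. reflexivity.
  - exact bb_bounded.
  - unfold avg. rewrite HN. exact HTA.
Qed.

Lemma mean_members_in01 : 0 <= A <= 1.
Proof.
  assert (Hm : forall j, In j (members C) -> 0 <= x j <= 1)
    by (intros j Hj; apply filter_In in Hj; rewrite in_seq in Hj; apply x_in01; lia).
  split; [apply mean_ge|apply mean_le]; try exact (members_nonempty x C lo hi x_cluster);
    intros j Hj; apply Hm, Hj.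
Qed.

Lemma cluster_rise p : (p < n)%nat -> C p = false ->
  target z s d x (members C) = A + s ->
  (forall j, (j < n)%nat -> C j = false -> A + s + d + r < x j) ->
  cluster x' C (A + s - d) (A + s + d).
Proof.
  intros Hp Cp HT Habove.
  pose proof (x_in01 p Hp). pose proof mean_members_in01. pose proof (Habove p Hp Cp).
  assert (Hnew := step_members (A + s) HT ltac:(rewrite Rabs_pos_eq; lra) ltac:(lra)).
  constructor.
  - intros i Hi Ci. specialize (Hnew i Hi Ci). split_Rabs; lra.
  - lra.
  - exact (cluster_pair x_cluster).
  - intros i Hi Ci. rewrite step_outsider by assumption. apply Habove; assumption.
  - intros i j Hi Hj Hij Ci Cj. rewrite !step_outsider by assumption.
    apply (cluster_apart x_cluster); assumption.
Qed.

Lemma cluster_absorb p : (p < n)%nat -> C p = false ->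
  (forall j, (j < n)%nat -> C j = false -> x p <= x j) ->
  target z s d x (members C) = x p - r + d -> x p - r <= A + s + d ->
  cluster x' (fun j => orb (C j) (j =? p)%nat) (x p - r) (x p).
Proof.
  intros Hp Cp Hmin HT Hnear. pose proof (x_in01 p Hp). pose proof mean_members_in01.
  pose proof (cluster_above x_cluster p Hp Cp).
  pose proof (mean_members_bounds x C lo hi x_cluster).
  assert (Hnew := step_members (x p - r + d) HT ltac:(split_Rabs; lra) ltac:(lra)).
  constructor.
  - intros i Hi Ci. destruct (C i) eqn:Ci0.
    + specialize (Hnew i Hi Ci0). split_Rabs; lra.
    + apply Nat.eqb_eq in Ci. subst i. rewrite step_outsider by assumption. lra.
  - lra.
  - destruct (cluster_pair x_cluster) as [a [b [Ha [Hb [Hab [Ca Cb]]]]]].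
    exists a, b. rewrite Ca, Cb. auto.
  - intros i Hi Ci. apply orb_false_iff in Ci. destruct Ci as [Ci Cip]. apply Nat.eqb_neq in Cip.
    rewrite step_outsider by assumption. pose proof (Hmin i Hi Ci).
    pose proof (cluster_apart x_cluster i p Hi Hp Cip Ci Cp). split_Rabs; lra.
  - intros i j Hi Hj Hij Ci Cj. apply orb_false_iff in Ci, Cj.
    rewrite !step_outsider by tauto. apply (cluster_apart x_cluster); tauto.
Qed.

Lemma cluster_progress : (exists p, (p < n)%nat /\ C p = false) ->
  exists C' lo' hi', cluster x' C' lo' hi' /\
    (1 - lo') + (s - d) * INR (n_outsiders C')
      <= (1 - lo) + (s - d) * INR (n_outsiders C) - (s - d).
Proof.
  intros [p0 [Hp0 Cp0]].
  destruct (target_far z s d x (members C)) as [p [Hp [Hmin HT]]].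
  { intros E. assert (Hin : In p0 (far (members C))) by (apply far_members; auto).
    rewrite E in Hin. exact Hin. }
  apply far_members in Hp. destruct Hp as [Hp Cp].
  assert (Hlowest : forall j, (j < n)%nat -> C j = false -> x p <= x j)
    by (intros j Hj Cj; apply Hmin, far_members; auto).
  pose proof (mean_members_bounds x C lo hi x_cluster).
  pose proof (cluster_above x_cluster p Hp Cp).
  destruct (Rlt_dec (A + s + d) (x p - r)) as [Hlt|Hge].
  - exists C, (A + s - d), (A + s + d). split; [|lra].
    apply (cluster_rise p Hp Cp HT). intros j Hj Cj. pose proof (Hlowest j Hj Cj). lra.
  - exists (fun j => orb (C j) (j =? p)%nat), (x p - r), (x p). split.
    + apply cluster_absorb; auto. lra.
    + assert (Hfewer : (S (n_outsiders (fun j => orb (C j) (j =? p)%nat)) <= n_outsiders C)%nat).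
      { apply length_filter_lt.
        - intros j. destruct (C j); simpl; auto.
        - exists p. rewrite in_seq, Cp, Nat.eqb_refl. simpl. split; [lia|auto]. }
      apply le_INR in Hfewer. rewrite S_INR in Hfewer.
      assert (Hgain : (s - d) * (INR (n_outsiders (fun j => orb (C j) (j =? p)%nat)) + 1)
                      <= (s - d) * INR (n_outsiders C)) by (apply Rmult_le_compat_l; lra).
      lra.
Qed.

Lemma consensus_progress D : 0 <= z <= 1 -> (forall i, (i < n)%nat -> C i = true) ->
  (forall i, (i < n)%nat -> Rabs (x i - z) <= D) ->
  (forall i, (i < n)%nat -> Rabs (x' i - z) <= d) \/
  (s < D /\ exists lo' hi', cluster x' C lo' hi' /\
     forall i, (i < n)%nat -> Rabs (x' i - z) <= D - (s - d)).
Proof.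
  intros Hz Hall HD.
  assert (Hnofar : far (members C) = []).
  { destruct (far (members C)) as [|j l] eqn:E; [reflexivity|].
    assert (Hj : In j (far (members C))) by (rewrite E; left; reflexivity).
    apply far_members in Hj. destruct Hj as [Hj Cj]. rewrite Hall in Cj by exact Hj. discriminate. }
  set (T := A + clip s (z - A)).
  assert (HT : target z s d x (members C) = T) by (apply target_no_far, Hnofar).
  assert (HAz : Rabs (z - A) <= D).
  { assert (Hm : forall j, In j (members C) -> z - D <= x j <= z + D).
    { intros j Hj. apply filter_In in Hj. destruct Hj as [Hj _]. apply in_seq in Hj.
      pose proof (HD j ltac:(lia)). split_Rabs; lra. }
    pose proof (members_nonempty x C lo hi x_cluster) as Hne.
    pose proof (mean_ge x (z - D) _ Hne (fun j Hj => proj1 (Hm j Hj))).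
    pose proof (mean_le x (z + D) _ Hne (fun j Hj => proj2 (Hm j Hj))).
    split_Rabs; lra. }
  assert (HTA : Rabs (T - A) <= s).
  { unfold T. replace (A + clip s (z - A) - A) with (clip s (z - A)) by ring.
    apply clip_bound. lra. }
  assert (HT01 : 0 <= T <= 1).
  { pose proof mean_members_in01. unfold T, clip, Rmax, Rmin. repeat destruct Rle_dec; lra. }
  assert (Hnew := step_members T HT ltac:(lra) HT01).
  assert (HTz : Rabs (T - z) = Rmax 0 (Rabs (z - A) - s)) by (apply clip_toward; lra).
  destruct (Rle_dec (Rabs (z - A)) s) as [Hclose|Hfar].
  - left. intros i Hi. pose proof (Hnew i Hi (Hall i Hi)).
    rewrite Rmax_left in HTz by lra. split_Rabs; lra.
  - right. split; [lra|]. rewrite Rmax_right in HTz by lra.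
    exists (T - d), (T + d). split.
    + constructor.
      * intros i Hi _. pose proof (Hnew i Hi (Hall i Hi)). split_Rabs; lra.
      * lra.
      * exact (cluster_pair x_cluster).
      * intros i Hi Ci. rewrite Hall in Ci by exact Hi. discriminate.
      * intros i j Hi _ _ Ci. rewrite Hall in Ci by exact Hi. discriminate.
    + intros i Hi. pose proof (Hnew i Hi (Hall i Hi)). split_Rabs; lra.
Qed.

End ClusterDynamics.

Section Trajectory.

Variables (eta d z s : R) (K T : nat) (st : nat -> nat -> R) (uu bb : nat -> nat -> nat -> R).
Hypotheses (d_pos : 0 < d) (d_r : 2 * d <= r) (s_gt_d : d < s)
  (s_reach : s + 2 * d <= (eta - d) / 2)
  (st_in01 : forall t, in01 n (st t))
  (st_succ : forall t, st (S t) = step n (fun _ => r) (st t) (uu t) (bb t))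
  (bb_bounded : forall t, (t < T)%nat -> noise_bounded d (st t) (bb t))
  (uu_down : forall t, (t < K)%nat -> forall j i, uu t j i = - (eta - d))
  (uu_ctrl : forall t, (K <= t)%nat -> forall j i, uu t j i = ctrl eta d z s (st t) i).

Lemma descent_phase : (K <= T)%nat -> forall t, (t <= K)%nat ->
  low (Rmax 0 (1 - INR t * Rmin ((eta - 2 * d) / 2) r)) (st t).
Proof.
  intros HKT.
  assert (Hsig : 0 <= Rmin ((eta - 2 * d) / 2) r) by (apply Rmin_glb; lra).
  induction t as [|t IH]; intros Ht.
  - intros i Hi _. pose proof (st_in01 0 i Hi). eapply Rle_trans; [|apply Rmax_r]. simpl. lra.
  - rewrite st_succ. set (sig := Rmin ((eta - 2 * d) / 2) r) in *.
    apply (low_mono (Rmax 0 (Rmax 0 (1 - INR t * sig) - sig))).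
    + rewrite S_INR. unfold Rmax. repeat destruct Rle_dec; nra.
    + apply (low_step eta d); try lra.
      * apply st_in01.
      * apply uu_down. lia.
      * apply bb_bounded. lia.
      * apply IH. lia.
Qed.

Lemma gather_phase N t C lo hi : (K <= t)%nat -> (t + N < T)%nat -> cluster (st t) C lo hi ->
  (1 - lo) + (s - d) * INR (n_outsiders C) <= INR N * (s - d) ->
  exists t', (t <= t' <= t + N)%nat /\
    exists C' lo' hi', cluster (st t') C' lo' hi' /\ forall i, (i < n)%nat -> C' i = true.
Proof.
  intros HKt HtT HC Hv.
  apply (potential_descent
    (fun t' w => exists C lo hi, cluster (st t') C lo hi /\
                 (1 - lo) + (s - d) * INR (n_outsiders C) <= w)
    _ (s - d) N t ((1 - lo) + (s - d) * INR (n_outsiders C)) ltac:(lra));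
    [|exists C, lo, hi; split; [exact HC|apply Rle_refl]|exact Hv].
  intros t' w Ht' [C' [lo' [hi' [HC' Hw]]]].
  destruct (classic (exists p, (p < n)%nat /\ C' p = false)) as [Hout|Hnone].
  - right.
    destruct (cluster_progress eta d z s d_pos d_r s_gt_d s_reach (st t') (uu t') (bb t')
      C' lo' hi' (st_in01 t') HC' (uu_ctrl t' ltac:(lia)) (bb_bounded t' ltac:(lia)) Hout)
      as [C'' [lo'' [hi'' [HC'' Hdrop]]]].
    rewrite <- st_succ in HC''.
    pose proof (cluster_lo_le_1 _ _ _ _ HC'' (st_in01 (S t'))).
    pose proof (pos_INR (n_outsiders C'')).
    assert (0 <= (s - d) * INR (n_outsiders C'')) by (apply Rmult_le_pos; lra).
    split; [lra|]. exists C'', lo'', hi''. split; [exact HC''|lra].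
  - left. exists C', lo', hi'. split; [exact HC'|].
    intros i Hi. destruct (C' i) eqn:Ci; [reflexivity|]. exfalso. apply Hnone. eauto.
Qed.

Lemma converge_phase N t C lo hi : (K <= t)%nat -> (t + N < T)%nat -> 0 <= z <= 1 ->
  cluster (st t) C lo hi -> (forall i, (i < n)%nat -> C i = true) ->
  (forall i, (i < n)%nat -> Rabs (st t i - z) <= s + INR N * (s - d)) ->
  exists t', (t < t' <= t + N + 1)%nat /\ forall i, (i < n)%nat -> Rabs (st t' i - z) <= d.
Proof.
  intros HKt HtT Hz HC Hall HD.
  destruct (potential_descent
    (fun t' w => exists lo hi, cluster (st t') C lo hi /\
                 forall i, (i < n)%nat -> Rabs (st t' i - z) <= s + w)
    (fun t' => forall i, (i < n)%nat -> Rabs (st (S t') i - z) <= d)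
    (s - d) N t (INR N * (s - d)) ltac:(lra)) as [t' [Ht' Hreach]];
    [|exists lo, hi; split; assumption|apply Rle_refl|exists (S t'); split; [lia|exact Hreach]].
  intros t' w Ht' [lo' [hi' [HC' Hw]]].
  destruct (consensus_progress eta d z s d_pos d_r s_gt_d s_reach (st t') (uu t') (bb t')
    C lo' hi' (st_in01 t') HC' (uu_ctrl t' ltac:(lia)) (bb_bounded t' ltac:(lia))
    (s + w) Hz Hall Hw)
    as [Hdone|[Hpos [lo'' [hi'' [HC'' Hcloser]]]]].
  - left. rewrite st_succ. exact Hdone.
  - right. split; [lra|]. exists lo'', hi''. rewrite st_succ. split; [exact HC''|].
    intros i Hi. specialize (Hcloser i Hi). lra.
Qed.

Lemma trajectory_reaches N2 N3 : (2 <= n)%nat -> 1 / INR (n - 1) <= r -> 0 <= z <= 1 ->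
  (K + N2 + N3 < T)%nat -> 1 <= INR K * Rmin ((eta - 2 * d) / 2) r ->
  1 + (s - d) * INR n <= INR N2 * (s - d) -> 1 <= s + INR N3 * (s - d) ->
  exists t, (K < t <= K + N2 + N3 + 1)%nat /\ forall i, (i < n)%nat -> Rabs (st t i - z) <= d.
Proof.
  intros Hn Hpair Hz HT HK HN2 HN3.
  assert (Hlow : low 0 (st K)).
  { pose proof (descent_phase ltac:(lia) K (le_n K)) as Hlow.
    rewrite Rmax_left in Hlow by lra. exact Hlow. }
  pose proof (cluster_at_bottom (st K) (st_in01 K) Hlow
    (exists_close_pair n r (st K) Hn (st_in01 K) Hpair)) as HC0.
  destruct (gather_phase N2 K _ 0 0 (le_n K) ltac:(lia) HC0) as [t1 [Ht1 [C [lo [hi [HC Hall]]]]]].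
  { assert (Hcnt : INR (n_outsiders (fun j => if Rle_dec (st K j) 0 then true else false)) <= INR n)
      by (apply le_INR; unfold n_outsiders; rewrite <- (length_seq n 0) at 2;
          apply filter_length_le).
    assert (0 <= s - d) by lra. nra. }
  destruct (converge_phase N3 t1 C lo hi ltac:(lia) ltac:(lia) Hz HC Hall) as [t2 [Ht2 Hnear]].
  { intros i Hi. pose proof (st_in01 t1 i Hi). split_Rabs; lra. }
  exists t2. split; [lia|exact Hnear].
Qed.

End Trajectory.

End Protocol.

Theorem lemma10 (n : nat) (eta r z alpha : R) :
  (3 <= n)%nat -> 0 < eta -> 0 < r <= 1 -> 1 / INR (n - 1) <= r ->
  0 <= z <= 1 -> 0 < alpha ->
  ftrr n (fun _ => r) eta (Sset n z alpha).
Proof.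
  intros Hn Heta [Hr _] Hpair Hz Halpha.
  set (d := Rmin (eta / 8) (Rmin (r / 2) (alpha / 2))).
  assert (Hd : 0 < d /\ 8 * d <= eta /\ 2 * d <= r /\ 2 * d <= alpha).
  { unfold d. pose proof (Rmin_l (r / 2) (alpha / 2)). pose proof (Rmin_r (r / 2) (alpha / 2)).
    pose proof (Rmin_l (eta / 8) (Rmin (r / 2) (alpha / 2))).
    pose proof (Rmin_r (eta / 8) (Rmin (r / 2) (alpha / 2))).
    repeat split; try lra. repeat apply Rmin_case; lra. }
  set (s := (eta - 5 * d) / 2).
  assert (Hs : d < s /\ s + 2 * d <= (eta - d) / 2) by (unfold s; lra).
  destruct (exists_nat_mult_ge 1 (Rmin ((eta - 2 * d) / 2) r) ltac:(apply Rmin_glb_lt; lra))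
    as [K HK].
  destruct (exists_nat_mult_ge (1 + (s - d) * INR n) (s - d) ltac:(lra)) as [N2 HN2].
  destruct (exists_nat_mult_ge 1 (s - d) ltac:(lra)) as [N3 HN3].
  exists (K + N2 + N3 + 1)%nat, d. split; [lia|]. split; [lra|].
  intros x0 Hx0. right.
  set (ul := fun t h (j i : nat) =>
    if (t <? K)%nat then - (eta - d) else ctrl n r eta d z s (cur x0 h) i).
  exists (fun _ _ _ => d), ul. split.
  { intros t h i _ _. split; [lra|]. intros j _ _. unfold ul. destruct (t <? K)%nat; [lra|].
    unfold ctrl, steer. match goal with |- context [clip ?w ?y] => pose proof (clip_bound w y) end.
    split_Rabs; lra. }
  intros b Hb.
  set (uu := fun t => ul t (hist n (fun _ => r) ul b x0 t)).
  assert (Hdown : forall t, (t < K)%nat -> forall j i, uu t j i = - (eta - d))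
    by (intros t Ht j i; unfold uu, ul; rewrite (proj2 (Nat.ltb_lt t K) Ht); reflexivity).
  assert (Hctrl : forall t, (K <= t)%nat -> forall j i,
                    uu t j i = ctrl n r eta d z s (state n (fun _ => r) ul b x0 t) i)
    by (intros t Ht j i; unfold uu, ul; rewrite (proj2 (Nat.ltb_ge t K) Ht); reflexivity).
  destruct (trajectory_reaches n r (Rlt_le _ _ Hr) eta d z s K (K + N2 + N3 + 1)
    (state n (fun _ => r) ul b x0) uu b ltac:(lra) ltac:(lra) ltac:(lra) ltac:(lra)
    (fun t => state_in01 n _ ul b x0 t Hx0) (state_succ n _ ul b x0)
    (fun t Ht i j Hi Hj Hji => Hb t i j Ht Hi Hj Hji) Hdown Hctrl N2 N3 ltac:(lia) Hpair Hz
    ltac:(lia) HK HN2 ltac:(lra)) as [t [Ht Hnear]].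
  exists t. split; [lia|]. split; [apply state_in01, Hx0|].
  intros i Hi. pose proof (Hnear i Hi). lra.
Qed.
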